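(* Let $R$ be a commutative ring with identity and $M$ a non-zero comultiplication $R$-module. If $G'(M)$ is non-null and connected, then $G'(M)$ has no cut vertex, i.e. there is no vertex $N$ such that $G'(M)$ with $N$ removed is disconnected.
   Context: An $R$-module $M$ is a comultiplication module if for every submodule $N$ of $M$ there is an ideal $I$ of $R$ with $N=\mathrm{Ann}_M(I)$. A submodule $N$ of $M$ is large if $N\cap L\neq 0$ for every non-zero submodule $L$ of $M$. The large sum graph $G'(M)$ has as vertex set the set of all non-zero non-large submodules of $M$, and two distinct vertices $N,K$ are adjacent iff $N+K$ is non-large in $M$. *)

From HB Require Import structures.
From mathcomp Require Import all_boot all_order all_algebra.
Set Implicit Arguments. Unset Strict Implicit. Unset Printing Implicit Defensive.
Import GRing.Theory.
Local Open Scope ring_scope.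

Section Defs.
Variables (R : comPzRingType) (M : lmodType R).

Definition submodule (N : M -> Prop) : Prop :=
  [/\ N 0, (forall x y, N x -> N y -> N (x + y)) &
      (forall (r : R) x, N x -> N (r *: x))].

Definition ideal (I : R -> Prop) : Prop :=
  [/\ I 0, (forall a b, I a -> I b -> I (a + b)) &
      (forall r a, I a -> I (r * a))].

Definition AnnM (I : R -> Prop) : M -> Prop :=
  fun m => forall r, I r -> r *: m = 0.

Definition comultiplication : Prop :=
  forall N, submodule N -> exists I, ideal I /\ forall m, N m <-> AnnM I m.

Definition nonzero_sub (N : M -> Prop) : Prop := exists x, N x /\ x <> 0.

Definition same_sub (N K : M -> Prop) : Prop := forall x, N x <-> K x.

Definition large (N : M -> Prop) : Prop :=
  forall L, submodule L -> nonzero_sub L -> exists x, [/\ N x, L x & x <> 0].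

Definition sum_sub (N K : M -> Prop) : M -> Prop :=
  fun x => exists a b, [/\ N a, K b & x = a + b].

Definition lsg_vertex (N : M -> Prop) : Prop :=
  [/\ submodule N, nonzero_sub N & ~ large N].

Definition lsg_adj (N K : M -> Prop) : Prop :=
  [/\ lsg_vertex N, lsg_vertex K, ~ same_sub N K & ~ large (sum_sub N K)].

Inductive reach (V : (M -> Prop) -> Prop) : (M -> Prop) -> (M -> Prop) -> Prop :=
  | reach_refl N : V N -> reach V N N
  | reach_step N K L : V N -> V K -> lsg_adj N K -> reach V K L -> reach V N L.

Definition lsg_connected : Prop :=
  forall N K, lsg_vertex N -> lsg_vertex K -> reach lsg_vertex N K.

Definition lsg_nonnull : Prop := exists N K, lsg_adj N K.

Definition lsg_vertex_minus (N : M -> Prop) : (M -> Prop) -> Prop :=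
  fun K => lsg_vertex K /\ ~ same_sub K N.

Definition lsg_cut_vertex (N : M -> Prop) : Prop :=
  lsg_vertex N /\
  exists K L, [/\ lsg_vertex_minus N K, lsg_vertex_minus N L &
                  ~ reach (lsg_vertex_minus N) K L].
End Defs.

From HB Require Import structures.
From mathcomp Require Import all_boot all_order all_algebra.
From Stdlib Require Import Classical FunctionalExtensionality PropExtensionality.
Set Implicit Arguments. Unset Strict Implicit. Unset Printing Implicit Defensive.
Import GRing.Theory.
Local Open Scope ring_scope.

(* Let N be a vertex and A, B two of its neighbours in G'(M).  Every path of
   G'(M) between vertices other than N that passes through N enters and leaves
   it through neighbours, so it suffices to join A and B in G'(M) - N.  If N has
   a proper non-zero submodule W, then W is a vertex adjacent to both A and B,
   because A + W <= A + N and B + W <= B + N.  Otherwise N = R n0 is simple, and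
   Ann(n0) is a prime ideal.  Replacing A by a cyclic submodule R y with
   n0 \notin R y if possible, we may assume that either n0 \notin A, or that n0
   lies in every non-zero cyclic submodule of A; likewise for B.  In each of the
   resulting cases the comultiplication property (every submodule not containing
   n0 has an annihilator not killing n0) shows that A + B, or A + (A :&: B) and
   (A :&: B) + B, are non-large. *)

Section LargeSumGraph.
Variables (R : comPzRingType) (M : lmodType R).
Implicit Types (N K L A B W X Y Z : M -> Prop) (x y : M).

Lemma scalerAC (a b : R) (v : M) : a *: (b *: v) = b *: (a *: v).
Proof. by rewrite !scalerA mulrC. Qed.

Lemma same_sub_eq N K : same_sub N K -> N = K.
Proof.
by move=> h; apply: functional_extensionality => x; apply: propositional_extensionality.
Qed.

Lemma submod0 N : submodule N -> N 0.
Proof. by case. Qed.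

Lemma submodD N x y : submodule N -> N x -> N y -> N (x + y).
Proof. by case=> _ h _; apply: h. Qed.

Lemma submodZ N (r : R) x : submodule N -> N x -> N (r *: x).
Proof. by case=> _ _ h; apply: h. Qed.

Lemma submodN N x : submodule N -> N x -> N (- x).
Proof. by move=> hN Nx; rewrite -scaleN1r; apply: submodZ. Qed.

Lemma submodI N K : submodule N -> submodule K -> submodule (fun x => N x /\ K x).
Proof.
move=> hN hK; split; first by split; apply: submod0.
- by move=> x y [? ?] [? ?]; split; apply: submodD.
- by move=> r x [? ?]; split; apply: submodZ.
Qed.

Lemma sum_subS X Y X' Y' :
  (forall x, X x -> X' x) -> (forall x, Y x -> Y' x) ->
  forall x, sum_sub X Y x -> sum_sub X' Y' x.
Proof.
by move=> hX hY x [a [b [Xa Yb ->]]]; exists a, b; split; [apply: hX|apply: hY|].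
Qed.

Lemma sum_subC X Y x : sum_sub X Y x -> sum_sub Y X x.
Proof. by move=> [a [b [Xa Yb ->]]]; exists b, a; split => //; rewrite addrC. Qed.

Lemma sum_sub_min X Y Z : submodule Z ->
  (forall x, X x -> Z x) -> (forall x, Y x -> Z x) ->
  forall x, sum_sub X Y x -> Z x.
Proof. by move=> hZ hX hY x [a [b [Xa Yb ->]]]; apply: submodD; auto. Qed.

Lemma sum_subl X Y x : submodule Y -> X x -> sum_sub X Y x.
Proof. by move=> hY Xx; exists x, 0; split => //; [exact: submod0|rewrite addr0]. Qed.

Definition cyclic y : M -> Prop := fun z => exists c : R, z = c *: y.

Lemma submod_cyclic y : submodule (cyclic y).
Proof.
split.
- by exists 0; rewrite scale0r.
- by move=> a b [c ->] [d ->]; exists (c + d); rewrite scalerDl.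
- by move=> r a [c ->]; exists (r * c); rewrite scalerA.
Qed.

Lemma cyclic_id y : cyclic y y.
Proof. by exists 1; rewrite scale1r. Qed.

Lemma cyclic_min N y : submodule N -> N y -> forall z, cyclic y z -> N z.
Proof. by move=> hN Ny z [c ->]; apply: submodZ. Qed.

Lemma nonlarge_le X Y : (forall x, X x -> Y x) -> ~ large Y -> ~ large X.
Proof.
move=> hXY nlY lX; apply: nlY => L hL nzL.
by have [x [Xx Lx nx]] := lX L hL nzL; exists x; split => //; apply: hXY.
Qed.

Lemma nonlargeP X :
  ~ large X <-> exists L, [/\ submodule L, nonzero_sub L &
                             forall x, X x -> L x -> x = 0].
Proof.
split=> [nlX|[L [hL nzL X0]] lX].
  apply: NNPP => C; apply: nlX => L hL nzL.
  apply: NNPP => C2; apply: C; exists L; split=> // x Xx Lx.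
  by apply: NNPP => nx; apply: C2; exists x; split.
by have [x [Xx Lx nx]] := lX L hL nzL; apply: nx; apply: X0.
Qed.

Lemma reach_trans V A B C : reach V A B -> reach V B C -> reach V A C.
Proof.
elim=> [//|N K L VN VK adj _ IH] rLC.
exact: reach_step VN VK adj (IH rLC).
Qed.

Lemma lsg_adj_sym A B : lsg_adj A B -> lsg_adj B A.
Proof.
case=> vA vB nAB nl; split => //.
- by move=> h; apply: nAB => x; split => /h.
- by apply: nonlarge_le nl => x; apply: sum_subC.
Qed.

Lemma reach_sym V A B : reach V A B -> reach V B A.
Proof.
elim=> [N VN|N K L VN VK adj _ IH]; first exact: reach_refl.
apply: reach_trans IH _.
exact: reach_step VK VN (lsg_adj_sym adj) (reach_refl VN).
Qed.

Lemma reach_of_nonlarge_sum N X Y :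
  lsg_vertex_minus N X -> lsg_vertex_minus N Y -> ~ large (sum_sub X Y) ->
  reach (@lsg_vertex_minus _ M N) X Y.
Proof.
move=> vX vY nl; case: (classic (same_sub X Y)) => [/same_sub_eq <-|nXY].
  exact: reach_refl.
apply: (reach_step vX vY _ (reach_refl vY)).
by split => //; [case: vX|case: vY].
Qed.

Lemma lsg_adj_vertex_minus A N : lsg_adj A N -> lsg_vertex_minus N A.
Proof. by case. Qed.

Lemma reach_avoid_or_neighbour N K L :
  reach (@lsg_vertex _ M) K L -> lsg_vertex_minus N K ->
  reach (@lsg_vertex_minus _ M N) K L \/
  exists A, lsg_adj A N /\ reach (@lsg_vertex_minus _ M N) K A.
Proof.
elim=> [X VX vX|X K' Y VX VK adj _ IH vX]; first by left; apply: reach_refl.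
case: (classic (same_sub K' N)) => [/same_sub_eq eqK'N|nK'N].
  by right; exists X; split; [rewrite -eqK'N|apply: reach_refl].
have vK' : lsg_vertex_minus N K' by [].
case: (IH vK') => [r|[A [adjA r]]].
  by left; apply: reach_step vX vK' adj r.
by right; exists A; split => //; apply: reach_step vX vK' adj r.
Qed.

Lemma neighbours_reach_of_proper N A B W :
  submodule W -> nonzero_sub W -> (forall x, W x -> N x) -> ~ same_sub W N ->
  lsg_adj A N -> lsg_adj B N -> reach (@lsg_vertex_minus _ M N) A B.
Proof.
move=> hW nzW WN nWN adjA adjB.
have [_ [_ _ nlN] _ nlAN] := adjA; have [_ _ _ nlBN] := adjB.
have vW : lsg_vertex_minus N W by split => //; split => //; apply: nonlarge_le nlN.
apply: (@reach_trans _ _ W).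
  apply: reach_of_nonlarge_sum => //; first exact: lsg_adj_vertex_minus.
  by apply: nonlarge_le nlAN; apply: sum_subS.
apply: reach_of_nonlarge_sum => //; first exact: lsg_adj_vertex_minus.
by apply: nonlarge_le nlBN => x /sum_subC; apply: sum_subS.
Qed.

Definition simple_sub N n0 :=
  [/\ submodule N, N n0, n0 <> 0, (forall y, N y -> cyclic n0 y) &
      (forall y, N y -> y <> 0 -> cyclic y n0)].

Definition in_all_cyclics A n0 := forall y, A y -> y <> 0 -> cyclic y n0.

Lemma simple_sub_of_minimal N n0 :
  submodule N -> N n0 -> n0 <> 0 ->
  (forall W, submodule W -> nonzero_sub W -> (forall x, W x -> N x) -> same_sub W N) ->
  simple_sub N n0.
Proof.
move=> hN Nn0 n0nz minN; split => // y Ny.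
  have nz_n0 : nonzero_sub (cyclic n0) by exists n0; split => //; apply: cyclic_id.
  by have /(_ y) [_] := minN _ (submod_cyclic n0) nz_n0 (cyclic_min hN Nn0); apply.
move=> ynz; have nz_y : nonzero_sub (cyclic y) by exists y; split => //; apply: cyclic_id.
by have /(_ n0) [_] := minN _ (submod_cyclic y) nz_y (cyclic_min hN Ny); apply.
Qed.

Lemma simple_ann_prime N n0 (r s : R) :
  simple_sub N n0 -> r *: (s *: n0) = 0 -> r *: n0 <> 0 -> s *: n0 = 0.
Proof.
case=> hN Nn0 _ _ gen rsn0 rn0.
have [c ->] := gen _ (submodZ r hN Nn0) rn0.
by rewrite scalerAC (scalerAC s r) rsn0 scaler0.
Qed.

Lemma comult_separate A n0 :
  comultiplication M -> submodule A -> ~ A n0 ->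
  exists r : R, (forall y, A y -> r *: y = 0) /\ r *: n0 <> 0.
Proof.
move=> cm hA nAn0; have [I [_ AI]] := cm A hA.
apply: NNPP => C; apply: nAn0; apply/AI => r Ir.
apply: NNPP => rn0; apply: C; exists r; split => // y /AI; exact.
Qed.

Section SimpleVertex.
Variables (N : M -> Prop) (n0 : M).
Hypothesis simpleN : simple_sub N n0.

(* [(A + B) :&: N = 0]: [r * s] kills [A + B], while [Ann(n0)] is prime. *)
Lemma nonlarge_sum_notin A B :
  comultiplication M -> submodule A -> submodule B -> ~ A n0 -> ~ B n0 ->
  ~ large (sum_sub A B).
Proof.
move=> cm hA hB nAn0 nBn0; have [hN Nn0 n0nz _ gen] := simpleN.
apply/nonlargeP; exists N; split => //; first by exists n0.
move=> x [a [b [Aa Bb ->]]] Nx; apply: NNPP => xnz.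
have [d n0E] := gen _ Nx xnz.
have [r [rA rn0]] := comult_separate cm hA nAn0.
have [s [sB sn0]] := comult_separate cm hB nBn0.
apply: sn0; apply: (@simple_ann_prime _ _ r) simpleN _ rn0.
rewrite n0E (scalerAC s d) (scalerAC r d) !scalerDr (sB b Bb) !scaler0 addr0.
by rewrite (scalerAC r s) (rA a Aa) !scaler0.
Qed.

Lemma nonlarge_sum_in_cyclics_notin A B :
  submodule A -> submodule B -> in_all_cyclics A n0 -> ~ B n0 ->
  ~ large (sum_sub B N) -> ~ large (sum_sub A B).
Proof.
move=> hA hB cycA nBn0 /nonlargeP [L [hL nzL BNL0]].
have [hN Nn0 _ _ _] := simpleN.
apply/nonlargeP; exists L; split => // _ [a [b [Aa Bb ->]]] Lx.
case: (classic (a = 0)) => [a0|anz].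
  by move: Lx; rewrite a0 add0r; apply: BNL0; apply: sum_subl.
have [c ac] := cycA _ Aa anz.
have c_ab : c *: (a + b) = 0.
  apply: BNL0; last exact: submodZ.
  by rewrite scalerDr -ac addrC; exists (c *: b), n0; split => //; apply: submodZ.
have n0E : n0 = - (c *: b) by apply/eqP; rewrite -addr_eq0 ac -scalerDr c_ab.
by exfalso; apply: nBn0; rewrite n0E; apply: submodN => //; apply: submodZ.
Qed.

Lemma simple_sub_mem_of_scale A (r : R) a :
  submodule A -> in_all_cyclics A n0 -> A n0 -> r *: n0 <> 0 ->
  A a -> N (r *: a) -> N a.
Proof.
move=> hA cycA An0 rn0 Aa Nra; have [hN Nn0 _ gen simp] := simpleN.
have [c rac] := gen _ Nra; have [d n0d] := simp _ (submodZ r hN Nn0) rn0.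
set z := a - (c * d) *: n0.
have rz : r *: z = 0.
  by rewrite scalerDr scalerN -scalerA !(scalerAC r) -n0d -rac subrr.
case: (classic (z = 0)) => [z0|znz].
  have -> : a = (c * d) *: n0 by apply/eqP; rewrite -subr_eq0 -/z z0.
  exact: submodZ.
exfalso; have Az : A z by apply: submodD => //; apply: submodN => //; apply: submodZ.
have [e n0E] := cycA _ Az znz.
by apply: rn0; rewrite n0E scalerAC rz scaler0.
Qed.

(* For a non-zero [x] in [(A + B) :&: L], some [r] kills [x] but not [n0]; then
   [r a = - r b] lies in [A :&: B <= N], which forces [a, b \in N <= A]. *)
Lemma nonlarge_sum_in_cyclics A B :
  comultiplication M -> submodule A -> submodule B ->
  in_all_cyclics A n0 -> in_all_cyclics B n0 -> A n0 -> B n0 -> ~ large A ->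
  (forall x, A x -> B x -> N x) -> ~ large (sum_sub A B).
Proof.
move=> cm hA hB cycA cycB An0 Bn0 /nonlargeP [L [hL nzL AL0]] ABN.
have [hN Nn0 n0nz gen _] := simpleN.
have NA y : N y -> A y by move/gen=> [c ->]; apply: submodZ.
apply/nonlargeP; exists L; split => // x [a [b [Aa Bb xE]]] Lx.
apply: NNPP => xnz.
have nxn0 : ~ cyclic x n0.
  by move=> [e n0E]; apply: n0nz; apply: AL0 => //; rewrite n0E; apply: submodZ.
have [r [rx0 rn0]] := comult_separate cm (submod_cyclic x) nxn0.
have rab : r *: a = - (r *: b).
  by apply/eqP; rewrite -addr_eq0 -scalerDr -xE rx0 //; apply: cyclic_id.
have Nra : N (r *: a).
  by apply: ABN; [exact: submodZ|rewrite rab; apply: submodN => //; apply: submodZ].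
have Nrb : N (r *: b) by rewrite -[r *: b]opprK -rab; apply: submodN.
have Na := simple_sub_mem_of_scale hA cycA An0 rn0 Aa Nra.
have Nb := simple_sub_mem_of_scale hB cycB Bn0 rn0 Bb Nrb.
by apply: xnz; apply: AL0 => //; apply: NA; rewrite xE; apply: submodD.
Qed.

Lemma neighbour_reduce A : lsg_adj A N ->
  exists A1, [/\ reach (@lsg_vertex_minus _ M N) A A1, lsg_adj A1 N &
             ~ A1 n0 \/ (in_all_cyclics A1 n0 /\ A1 n0)].
Proof.
move=> adjA; have [[hA nzA _] vN _ nlAN] := adjA; have [hN _ _] := vN.
case: (classic (exists y, [/\ A y, y <> 0 & ~ cyclic y n0])) => [[y [Ay ynz nyn0]]|C].
  have yA := cyclic_min hA Ay.
  have adjy : lsg_adj (cyclic y) N.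
    split => //.
    - split; first exact: submod_cyclic.
      + by exists y; split => //; apply: cyclic_id.
      + by apply: nonlarge_le nlAN => z /yA; apply: sum_subl.
    - by move=> h; apply: nyn0; apply/h; case: simpleN.
    - by apply: nonlarge_le nlAN; apply: sum_subS.
  exists (cyclic y); split => //; last by left.
  apply: reach_of_nonlarge_sum; try exact: lsg_adj_vertex_minus.
  apply: nonlarge_le nlAN => z /(sum_sub_min hA (fun _ a => a) yA) Az.
  exact: sum_subl.
have cycA : in_all_cyclics A n0.
  by move=> y Ay ynz; apply: NNPP => nc; apply: C; exists y; split.
exists A; split => //; first by apply/reach_refl/lsg_adj_vertex_minus.
right; split => //; have [y [Ay ynz]] := nzA.
by have [c ->] := cycA _ Ay ynz; apply: submodZ.
Qed.

Lemma neighbours_reach_of_simple A B :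
  comultiplication M -> lsg_adj A N -> lsg_adj B N ->
  reach (@lsg_vertex_minus _ M N) A B.
Proof.
move=> cm adjA adjB; have [_ Nn0 n0nz _ _] := simpleN.
have [A1 [rAA1 adjA1 hA1]] := neighbour_reduce adjA.
have [B1 [rBB1 adjB1 hB1]] := neighbour_reduce adjB.
apply: (reach_trans rAA1); apply: (reach_trans _ (reach_sym rBB1)).
have [[sA1 _ nlA1] _ _ nlA1N] := adjA1; have [[sB1 _ nlB1] _ _ nlB1N] := adjB1.
have vA1 := lsg_adj_vertex_minus adjA1; have vB1 := lsg_adj_vertex_minus adjB1.
case: hA1 => [nA1n0|[cycA1 A1n0]]; case: hB1 => [nB1n0|[cycB1 B1n0]].
- exact/reach_of_nonlarge_sum/nonlarge_sum_notin.
- apply: reach_of_nonlarge_sum => //; apply: nonlarge_le.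
    by move=> x; apply: sum_subC.
  exact: nonlarge_sum_in_cyclics_notin.
- exact/reach_of_nonlarge_sum/nonlarge_sum_in_cyclics_notin.
case: (classic (forall x, A1 x -> B1 x -> N x)) => [A1B1N|nA1B1N].
  exact/reach_of_nonlarge_sum/nonlarge_sum_in_cyclics.
pose D x := A1 x /\ B1 x.
have sD : submodule D by apply: submodI.
have vD : lsg_vertex_minus N D.
  split; first split => //.
  - by exists n0; split => //; split.
  - by apply: nonlarge_le nlA1 => x [].
  - by move=> DN; apply: nA1B1N => x A1x B1x; apply/DN.
apply: (@reach_trans _ _ D); apply: reach_of_nonlarge_sum => //.
  by apply: nonlarge_le nlA1; apply: sum_sub_min => // x [].
by apply: nonlarge_le nlB1; apply: sum_sub_min => // x [].
Qed.

End SimpleVertex.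

Lemma neighbours_reach N A B :
  comultiplication M -> lsg_adj A N -> lsg_adj B N ->
  reach (@lsg_vertex_minus _ M N) A B.
Proof.
move=> cm adjA adjB; have [_ [hN [n0 [Nn0 n0nz]] _] _ _] := adjA.
case: (classic (exists W, [/\ submodule W, nonzero_sub W,
                 (forall x, W x -> N x) & ~ same_sub W N])).
  by move=> [W [hW nzW WN nWN]]; apply: (neighbours_reach_of_proper hW nzW WN nWN).
move=> noW; apply: (neighbours_reach_of_simple (n0 := n0)) => //.
apply: simple_sub_of_minimal => // W hW nzW WN.
by apply: NNPP => nWN; apply: noW; exists W.
Qed.

End LargeSumGraph.

Theorem theorem2p9 (R : comPzRingType) (M : lmodType R) :
  (exists m : M, m <> 0) ->
  comultiplication M ->
  lsg_nonnull M ->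
  lsg_connected M ->
  ~ (exists N : M -> Prop, lsg_cut_vertex N).
Proof.
move=> _ cm _ conn [N [_ [K [L [vK vL]]]]]; apply.
have [vK' _] := vK; have [vL' _] := vL.
case: (reach_avoid_or_neighbour (conn K L vK' vL') vK) => [//|[A [adjA rKA]]].
case: (reach_avoid_or_neighbour (conn L K vL' vK') vL) => [/reach_sym //|[B [adjB rLB]]].
exact: reach_trans rKA (reach_trans (neighbours_reach cm adjA adjB) (reach_sym rLB)).
Qed.
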